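(* Consider the reserve price problem (P): $\max_{\beta\in X}R(\beta)=\frac1n\sum_{i=1}^n r(w^i\cdot\beta;b_i^{(1)},b_i^{(2)})$, and the mixed-integer program (MIP): $$\max_{\beta,v,y,z}\ \frac1n\sum_{i=1}^n y_i\quad\text{s.t. } v_i=w^i\cdot\beta,\ \ (v_i,y_i,z^i)\in F(b_i^{(1)},b_i^{(2)},l_i,u_i)\ \ (i=1,\dots,n),\ \ \beta\in X,$$ with $z^i\in\mathbb{R}^3$. Then (i) if $(\beta,v,y,z)$ is an optimal solution of (MIP), $\beta$ is an optimal solution of (P); and (ii) if $\beta$ is an optimal solution of (P), there exist $v,y,z$ such that $(\beta,v,y,z)$ is an optimal solution of (MIP).
   Context: The reward function is $r(v;b^{(1)},b^{(2)})=b^{(2)}$ if $v\le b^{(2)}$, $=v$ if $b^{(2)}<v\le b^{(1)}$, and $=0$ if $v>b^{(1)}$. Data: $w^i\in\mathbb{R}^d$, $b_i^{(1)}\ge b_i^{(2)}\ge 0$ ($i=1,\dots,n$), $X=[L,U]^d$; $l_i=\min_{\beta\in X}w^i\cdot\beta$, $u_i=\max_{\beta\in X}w^i\cdot\beta$. For data $b^{(1)},b^{(2)},l,u$, $F(b^{(1)},b^{(2)},l,u)$ is the set of $(v,y,z)\in\mathbb{R}\times\mathbb{R}\times\mathbb{R}^3$ satisfying $y\le b^{(2)}z_1+b^{(1)}z_2$, $y\ge b^{(2)}(z_1+z_2)$, $y\le v+(b^{(2)}-l)z_1-b^{(1)}z_3$, $y\ge v-uz_3$, $l\le v\le u$, $z_1+z_2+z_3=1$,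 $z\in[0,1]^3$, and $z\in\mathbb{Z}^3$. *)

From Stdlib Require Import Reals ZArith.
Open Scope R_scope.

Fixpoint sumR (n : nat) (f : nat -> R) : R :=
  match n with O => 0 | S k => sumR k f + f k end.

(* dot product in R^d, vectors as functions nat -> R (coordinates 0..d-1) *)
Definition dot (d : nat) (a b : nat -> R) : R := sumR d (fun j => a j * b j).

Definition inX (d : nat) (L U : R) (beta : nat -> R) : Prop :=
  forall j, (j < d)%nat -> L <= beta j <= U.

Definition reward (v b1 b2 : R) : R :=
  if Rle_dec v b2 then b2 else if Rle_dec v b1 then v else 0.

Definition revenue (n d : nat) (w : nat -> nat -> R) (b1 b2 : nat -> R)
  (beta : nat -> R) : R :=
  / INR n * sumR n (fun i => reward (dot d (w i) beta) (b1 i) (b2 i)).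

Definition is_int (x : R) : Prop := exists k : Z, x = IZR k.

Definition inF (b1 b2 l u : R) (v y : R) (z : R * R * R) : Prop :=
  let '(z1, z2, z3) := z in
  y <= b2 * z1 + b1 * z2 /\
  y >= b2 * (z1 + z2) /\
  y <= v + (b2 - l) * z1 - b1 * z3 /\
  y >= v - u * z3 /\
  l <= v <= u /\
  z1 + z2 + z3 = 1 /\
  0 <= z1 <= 1 /\ 0 <= z2 <= 1 /\ 0 <= z3 <= 1 /\
  is_int z1 /\ is_int z2 /\ is_int z3.

Definition P_optimal n d w L U b1 b2 (beta : nat -> R) : Prop :=
  inX d L U beta /\
  forall beta', inX d L U beta' -> revenue n d w b1 b2 beta' <= revenue n d w b1 b2 beta.

Definition MIP_feasible n d w L U b1 b2 (l u : nat -> R)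
  (beta v y : nat -> R) (z : nat -> R * R * R) : Prop :=
  inX d L U beta /\
  forall i, (i < n)%nat ->
    v i = dot d (w i) beta /\ inF (b1 i) (b2 i) (l i) (u i) (v i) (y i) (z i).

Definition MIP_obj (n : nat) (y : nat -> R) : R := / INR n * sumR n y.

Definition MIP_optimal n d w L U b1 b2 l u beta v y z : Prop :=
  MIP_feasible n d w L U b1 b2 l u beta v y z /\
  forall beta' v' y' z', MIP_feasible n d w L U b1 b2 l u beta' v' y' z' ->
    MIP_obj n y' <= MIP_obj n y.

Definition is_min_over_X d L U (wi : nat -> R) (m : R) : Prop :=
  (exists beta, inX d L U beta /\ dot d wi beta = m) /\
  (forall beta, inX d L U beta -> m <= dot d wi beta).
Definition is_max_over_X d L U (wi : nat -> R) (m : R) : Prop :=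
  (exists beta, inX d L U beta /\ dot d wi beta = m) /\
  (forall beta, inX d L U beta -> dot d wi beta <= m).

(* For each bid, the integer vector z of F selects which branch of the piecewise reward
   applies, and the constraints of F then force y <= r(v; b1, b2), with equality attained
   by choosing the branch that actually applies to v (the bounds l <= v <= u make the
   big-M constraints inactive on the other branches).  Hence every feasible point of the
   MIP has objective at most R(beta), and every beta in X completes to a feasible point
   with objective exactly R(beta): the two problems have the same optimal betas. *)
From Stdlib Require Import Reals ZArith Lra Lia.
Open Scope R_scope.

Lemma is_int_01 (x : R) : is_int x -> 0 <= x <= 1 -> x = 0 \/ x = 1.
Proof.
  intros [k ->] [H0 H1].
  apply le_IZR in H0; apply le_IZR in H1.
  assert (k = 0%Z \/ k = 1%Z) as [-> | ->] by lia; auto.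
Qed.

Lemma inF_le_reward (b1 b2 l u v y : R) (z : R * R * R) :
  b1 >= b2 -> b2 >= 0 -> inF b1 b2 l u v y z -> y <= reward v b1 b2.
Proof.
  destruct z as [[z1 z2] z3]; unfold inF, reward.
  intros Hb Hb2 (H1 & H2 & H3 & H4 & H5 & H6 & H7 & H8 & H9 & I1 & I2 & I3).
  destruct (is_int_01 _ I1 H7) as [-> | ->];
  destruct (is_int_01 _ I2 H8) as [-> | ->];
  destruct (is_int_01 _ I3 H9) as [-> | ->];
  destruct (Rle_dec v b2); try destruct (Rle_dec v b1); lra.
Qed.

Definition reward_branch (v b1 b2 : R) : R * R * R :=
  if Rle_dec v b2 then (1, 0, 0) else if Rle_dec v b1 then (0, 1, 0) else (0, 0, 1).

Lemma inF_reward (b1 b2 l u v : R) :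
  b1 >= b2 -> l <= v <= u -> inF b1 b2 l u v (reward v b1 b2) (reward_branch v b1 b2).
Proof.
  intros Hb Hv; unfold inF, reward, reward_branch.
  assert (I0 : is_int 0) by (exists 0%Z; reflexivity).
  assert (I1 : is_int 1) by (exists 1%Z; reflexivity).
  destruct (Rle_dec v b2); [| destruct (Rle_dec v b1)]; repeat split; auto; lra.
Qed.

Lemma sumR_le (n : nat) (f g : nat -> R) :
  (forall i, (i < n)%nat -> f i <= g i) -> sumR n f <= sumR n g.
Proof.
  induction n as [| n IH]; simpl; intros H; [lra |].
  assert (sumR n f <= sumR n g) by (apply IH; intros; apply H; lia).
  assert (f n <= g n) by (apply H; lia).
  lra.
Qed.

(* Also holds for [n = 0], where [/ 0 = 0]. *)
Lemma Rinv_INR_ge0 (n : nat) : 0 <= / INR n.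
Proof.
  destruct n as [| n]; [simpl; rewrite Rinv_0; lra |].
  left; apply Rinv_0_lt_compat, lt_0_INR; lia.
Qed.

Section MIPReformulation.

Variables (n d : nat) (w : nat -> nat -> R) (L U : R) (b1 b2 l u : nat -> R).
Hypothesis Hb : forall i, (i < n)%nat -> b1 i >= b2 i /\ b2 i >= 0.
Hypothesis Hv_bounds : forall i beta, (i < n)%nat -> inX d L U beta ->
  l i <= dot d (w i) beta <= u i.

Definition mip_v (beta : nat -> R) (i : nat) : R := dot d (w i) beta.
Definition mip_y (beta : nat -> R) (i : nat) : R := reward (mip_v beta i) (b1 i) (b2 i).
Definition mip_z (beta : nat -> R) (i : nat) : R * R * R :=
  reward_branch (mip_v beta i) (b1 i) (b2 i).

Lemma MIP_feasible_completion (beta : nat -> R) : inX d L U beta ->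
  MIP_feasible n d w L U b1 b2 l u beta (mip_v beta) (mip_y beta) (mip_z beta).
Proof.
  intros Hx; split; [exact Hx |]; intros i Hi; split; [reflexivity |].
  apply inF_reward; [apply Hb, Hi | apply Hv_bounds; assumption].
Qed.

Lemma MIP_obj_completion (beta : nat -> R) :
  MIP_obj n (mip_y beta) = revenue n d w b1 b2 beta.
Proof. reflexivity. Qed.

Lemma MIP_obj_le_revenue beta v y z :
  MIP_feasible n d w L U b1 b2 l u beta v y z -> MIP_obj n y <= revenue n d w b1 b2 beta.
Proof.
  intros [_ Hi]; unfold MIP_obj, revenue.
  apply Rmult_le_compat_l; [apply Rinv_INR_ge0 |].
  apply sumR_le; intros i Hin.
  destruct (Hi i Hin) as [-> HF]; destruct (Hb i Hin) as [Hb12 Hb2].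
  exact (inF_le_reward _ _ _ _ _ _ _ Hb12 Hb2 HF).
Qed.

End MIPReformulation.

Theorem corollary1 (n d : nat) (w : nat -> nat -> R) (L U : R)
  (b1 b2 l u : nat -> R)
  (Hb : forall i, (i < n)%nat -> b1 i >= b2 i /\ b2 i >= 0)
  (Hl : forall i, (i < n)%nat -> is_min_over_X d L U (w i) (l i))
  (Hu : forall i, (i < n)%nat -> is_max_over_X d L U (w i) (u i)) :
  (forall beta v y z,
     MIP_optimal n d w L U b1 b2 l u beta v y z ->
     P_optimal n d w L U b1 b2 beta) /\
  (forall beta,
     P_optimal n d w L U b1 b2 beta ->
     exists v y z, MIP_optimal n d w L U b1 b2 l u beta v y z).
Proof.
  assert (Hv : forall i beta, (i < n)%nat -> inX d L U beta ->
             l i <= dot d (w i) beta <= u i).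
  { intros i beta Hi Hx; split; [apply (Hl i Hi) | apply (Hu i Hi)]; exact Hx. }
  pose proof (MIP_feasible_completion n d w L U b1 b2 l u Hb Hv) as Hfeas.
  pose proof (MIP_obj_le_revenue n d w L U b1 b2 l u Hb) as Hle.
  split.
  - intros beta v y z [Hf Hopt]; split; [apply Hf |]; intros beta' Hx'.
    rewrite <- MIP_obj_completion.
    apply (Rle_trans _ _ _ (Hopt _ _ _ _ (Hfeas _ Hx'))).
    exact (Hle _ _ _ _ Hf).
  - intros beta [Hx Hopt].
    exists (mip_v d w beta), (mip_y d w b1 b2 beta), (mip_z d w b1 b2 beta).
    split; [apply Hfeas, Hx |]; intros beta' v' y' z' Hf'.
    rewrite MIP_obj_completion.
    apply (Rle_trans _ _ _ (Hle _ _ _ _ Hf')), Hopt, Hf'.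
Qed.
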